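(* Let $\mathcal{R},\mathcal{R}'$ be finite sets with $|\mathcal{R}|=|\mathcal{R}'|$, let $\mathcal{A}$ be a finite set of attributes, for each $a\in\mathcal{A}$ let $\mathcal{V}_a$ be a finite set and $\rho_a\in[0,1)$, and let $\mathcal{V}=\mathcal{V}'=\prod_{a\in\mathcal{A}}\mathcal{V}_a$. Then retention-replacement perturbation with retention probabilities $\rho_a$ is a $Pk$-anonymization for $$k=1+(|\mathcal{R}|-1)\prod_{a\in\mathcal{A}}\left(\frac{1-\rho_a}{1+(|\mathcal{V}_a|-1)\rho_a}\right)^2.$$
   Context: A table on $(\mathcal{R},\mathcal{V})$ is a map $\mathcal{R}\to\mathcal{V}$; $\mathcal{T}$, $\mathcal{T}'$ denote the sets of tables on $(\mathcal{R},\mathcal{V})$ and $(\mathcal{R}',\mathcal{V}')$. For sets $X,Y$, $X\to Y$ is the set of maps $X\to Y$. A privacy mechanism is $(\mathcal{R},\mathcal{V},\mathcal{R}',\mathcal{V}',\Pi,\Delta)$ with $\Pi$ uniformly distributed over bijections $\mathcal{R}\to\mathcal{R}'$ and $\Delta$ a random variable in $\mathcal{T}\to(\mathcal{R}\to\mathcal{V}')$; it is a privacy mechanism from $T$ to $T'$ if $T,\Pi,\Delta$ are mutually independent and $\Delta(T)=T'\circ\Pi$. Retention-replacement perturbation is the mechanism in which, for every $\tau\in\mathcal{T}$, the values $(\Delta(\tau))(r)$, $r\in\mathcal{R}$, are independent and $\Pr[(\Delta(\tau))(r)=v']=\prod_{a\in\mathcal{A}}(A_a)_{\tau(r)_a,v'_a}$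 (where $w_a$ is the $a$-component of $w$), with $(A_a)_{x,y}=\rho_a+\frac{1-\rho_a}{|\mathcal{V}_a|}$ if $x=y$ and $(A_a)_{x,y}=\frac{1-\rho_a}{|\mathcal{V}_a|}$ otherwise. $(\Delta,\tau')$ is $Pk$-anonymous if for all random variables $T,T'$ such that $\Delta$ is a privacy mechanism from $T$ to $T'$ and all $r\in\mathcal{R},r'\in\mathcal{R}'$, $\Pr[\Pi(r)=r'\mid T'=\tau']\le1/k$; $\Delta$ is a $Pk$-anonymization if $(\Delta,\tau')$ is $Pk$-anonymous for every $\tau'\in\mathcal{T}'$ for which some $\tau\in\mathcal{T}$ has $\Pr[\Delta(\tau)=\tau'\circ\Pi]\ne0$. *)

From mathcomp Require Import all_boot all_order all_algebra.
Set Implicit Arguments. Unset Strict Implicit. Unset Printing Implicit Defensive.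
Import Order.TTheory GRing.Theory Num.Theory.
Local Open Scope ring_scope.

Section Prob.
Variables (R : realFieldType) (Omega : finType) (P : Omega -> R).

Definition is_prob := (forall w, 0 <= P w) /\ \sum_w P w = 1.

Definition Pr (E : pred Omega) : R := \sum_(w | E w) P w.

(* conditional probability Pr[E | F] (= 0 when Pr[F] = 0, by x/0 = 0) *)
Definition cPr (E F : pred Omega) : R :=
  Pr [pred w | E w && F w] / Pr F.

Definition indep3 (T1 T2 T3 : finType)
    (X1 : Omega -> T1) (X2 : Omega -> T2) (X3 : Omega -> T3) :=
  forall (A1 : {set T1}) (A2 : {set T2}) (A3 : {set T3}),
    Pr [pred w | [&& X1 w \in A1, X2 w \in A2 & X3 w \in A3]] =
    Pr [pred w | X1 w \in A1] * Pr [pred w | X2 w \in A2]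
      * Pr [pred w | X3 w \in A3].

Definition indep_family (I T : finType) (X : I -> Omega -> T) :=
  forall S : I -> {set T},
    Pr [pred w | [forall i, X i w \in S i]] =
    \prod_i Pr [pred w | X i w \in S i].
End Prob.

Notation value Va := {dffun forall a, Va a}.

Definition isbij (X Y : finType) (f : {ffun X -> Y}) : bool :=
  injectiveb f && [forall y, y \in codom f].

Section Mech.
Variables (R : realFieldType) (Omega : finType) (P : Omega -> R).
Variables (Rw Rw' : finType) (V V' : finType).

Definition compose_tab (tau' : {ffun Rw' -> V'}) (pi : {ffun Rw -> Rw'})
  : {ffun Rw -> V'} := [ffun r => tau' (pi r)].

Definition privacy_mechanism (Pi : Omega -> {ffun Rw -> Rw'})
    (Delta : Omega -> {ffun {ffun Rw -> V} -> {ffun Rw -> V'}}) :=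
  forall f : {ffun Rw -> Rw'},
    Pr P [pred w | Pi w == f] =
    if isbij f then 1 / #|[pred g : {ffun Rw -> Rw'} | isbij g]|%:R else 0.

Definition mech_from (Pi : Omega -> {ffun Rw -> Rw'})
    (Delta : Omega -> {ffun {ffun Rw -> V} -> {ffun Rw -> V'}}) (T : Omega -> {ffun Rw -> V})
    (T' : Omega -> {ffun Rw' -> V'}) :=
  privacy_mechanism Pi Delta /\ indep3 P T Pi Delta /\
  (forall w, Delta w (T w) = compose_tab (T' w) (Pi w)).

Definition Pk_anonymous (k : R) (Pi : Omega -> {ffun Rw -> Rw'})
    (Delta : Omega -> {ffun {ffun Rw -> V} -> {ffun Rw -> V'}}) (tau' : {ffun Rw' -> V'}) :=
  forall T T', mech_from Pi Delta T T' ->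
  forall (r : Rw) (r' : Rw'),
    cPr P [pred w | Pi w r == r'] [pred w | T' w == tau'] <= 1 / k.

Definition Pk_anonymization (k : R) (Pi : Omega -> {ffun Rw -> Rw'})
    (Delta : Omega -> {ffun {ffun Rw -> V} -> {ffun Rw -> V'}}) :=
  forall tau' : {ffun Rw' -> V'},
    (exists tau : {ffun Rw -> V},
        Pr P [pred w | Delta w tau == compose_tab tau' (Pi w)] != 0) ->
    Pk_anonymous k Pi Delta tau'.
End Mech.

Section RR.
Variables (R : realFieldType) (A : finType) (Va : A -> finType) (rho : A -> R).

Definition Amat (a : A) (x y : Va a) : R :=
  if x == y then rho a + (1 - rho a) / #|Va a|%:R
  else (1 - rho a) / #|Va a|%:R.

Variables (Omega : finType) (P : Omega -> R) (Rw Rw' : finType).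

Definition rr_perturbation (Pi : Omega -> {ffun Rw -> Rw'})
    (Delta : Omega -> {ffun {ffun Rw -> value Va} -> {ffun Rw -> value Va}}) :=
  privacy_mechanism P Pi Delta /\
  forall tau : {ffun Rw -> value Va},
    indep_family P (fun r w => Delta w tau r) /\
    forall (r : Rw) (v' : value Va),
      Pr P [pred w | Delta w tau r == v'] = \prod_(a : A) @Amat a (tau r a) (v' a).
End RR.

From mathcomp Require Import all_boot all_order all_algebra all_fingroup.
From mathcomp Require Import reals.
From mathcomp Require Import ring lra.
Set Implicit Arguments. Unset Strict Implicit. Unset Printing Implicit Defensive.
Import Order.TTheory GRing.Theory Num.Theory.
Local Open Scope ring_scope.

(* Given the published table tau', the weight of a bijection pi is
   h(pi) = sum_tau Pr[T = tau] Pr[Pi = pi] Pr[Delta(tau) = tau' o pi].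
   Precomposing pi with a transposition (r s) changes two rows of tau' o pi,
   and the probability of perturbing a row into a given value changes by at
   most the factor c = prod_a (1 - rho_a) / (1 + (|V_a| - 1) rho_a), the ratio
   of the smallest to the largest entry of A_a; hence h(pi o (r s)) >= c^2 h(pi).
   For pi with pi(r) = r', the |R| - 1 maps pi o (r s), s <> r, send s to r', so
   by injectivity (|R| - 1) c^2 Pr[Pi(r) = r', T' = tau'] <= Pr[Pi(r) <> r', T' = tau'],
   which is the bound Pr[Pi(r) = r' | T' = tau'] <= 1/k. *)

Section ProdTperm.
Variables (R : numDomainType) (I : finType) (X : Type) (q : I -> X -> R) (c : R).
Hypotheses (q_ge0 : forall i y, 0 <= q i y) (c_ge0 : 0 <= c) (c_le1 : c <= 1).
Hypothesis q_ratio : forall i y y', c * q i y' <= q i y.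

Lemma prod_tperm_ge (x : I -> X) (r s : I) :
  c ^+ 2 * \prod_i q i (x i) <= \prod_i q i (x (tperm r s i)).
Proof.
pose w i := if i \in [set r; s] then c else 1.
have w_ge0 i : 0 <= w i by rewrite /w; case: ifP.
have wq_le i : w i * q i (x i) <= q i (x (tperm r s i)).
  rewrite /w; case: ifPn => [//|]; rewrite !inE negb_or => /andP[ir si].
  by rewrite mul1r tpermD // eq_sym.
apply: le_trans (_ : \prod_i (w i * q i (x i)) <= _); last first.
  by apply: ler_prod => i _; rewrite mulr_ge0 ?wq_le.
rewrite big_split /=; apply: ler_wpM2r; first exact: prodr_ge0.
rewrite -big_mkcond /= prodr_const cards2.
by apply: ler_wiXn2l; case: (r != s).
Qed.
End ProdTperm.

Section RetentionRatio.
Variables (R : realFieldType) (A : finType) (Va : A -> finType) (rho : A -> R).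
Hypothesis rho01 : forall a, 0 <= rho a < 1.

Definition retention_ratio a : R := (1 - rho a) / (1 + (#|Va a|%:R - 1) * rho a).

Definition rr_ratio : R := \prod_a retention_ratio a.

Definition value_prob (v y : value Va) : R := \prod_a Amat rho (v a) (y a).

Definition table_prob (I : finType) (tau x : {ffun I -> value Va}) : R :=
  \prod_i value_prob (tau i) (x i).

Lemma retention_denom_gt0 a : 0 < 1 + (#|Va a|%:R - 1) * rho a.
Proof. have /andP[? ?] := rho01 a; have ? : 0 <= (#|Va a|%:R : R) by []; nra. Qed.

Lemma retention_ratio_ge0 a : 0 <= retention_ratio a.
Proof.
have /andP[_ ?] := rho01 a.
by apply: divr_ge0; [lra | exact: ltW (retention_denom_gt0 a)].
Qed.

Lemma retention_ratio_le1 a : retention_ratio a <= 1.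
Proof.
have /andP[? ?] := rho01 a; have ? : 0 <= (#|Va a|%:R : R) by [].
by rewrite ler_pdivrMr ?retention_denom_gt0 //; nra.
Qed.

Lemma Amat_ge0 a (x y : Va a) : 0 <= Amat rho x y.
Proof.
have /andP[? ?] := rho01 a.
have ? : 0 <= (1 - rho a) / #|Va a|%:R by apply: divr_ge0; [lra | exact: ler0n].
by rewrite /Amat; case: ifP => _ //; lra.
Qed.

Lemma retention_ratio_Amat a (x y y' : Va a) :
  retention_ratio a * Amat rho x y' <= Amat rho x y.
Proof.
have /andP[? ?] := rho01 a.
have n_gt0 : 0 < (#|Va a|%:R : R) by rewrite ltr0n; apply/card_gt0P; exists x.
set n := (#|Va a|%:R : R) in n_gt0 *.
have ? : 0 <= (1 - rho a) / n by apply: divr_ge0; lra.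
have Amat_max : Amat rho x y' <= rho a + (1 - rho a) / n.
  by rewrite /Amat; case: ifP => _; lra.
have Amat_min : (1 - rho a) / n <= Amat rho x y.
  by rewrite /Amat; case: ifP => _; lra.
apply: le_trans (ler_wpM2l (retention_ratio_ge0 a) Amat_max) _.
suff -> : retention_ratio a * (rho a + (1 - rho a) / n) = (1 - rho a) / n by [].
have := retention_denom_gt0 a; rewrite /retention_ratio -/n => ?.
by field; apply/andP; split; [lra | apply/eqP; lra].
Qed.

Lemma rr_ratio_ge0 : 0 <= rr_ratio.
Proof. by apply: prodr_ge0 => a _; apply: retention_ratio_ge0. Qed.

Lemma rr_ratio_le1 : rr_ratio <= 1.
Proof. by apply: prodr_ile1 => a _; rewrite retention_ratio_ge0 retention_ratio_le1. Qed.

Lemma value_prob_ge0 v y : 0 <= value_prob v y.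
Proof. by apply: prodr_ge0 => a _; apply: Amat_ge0. Qed.

Lemma rr_ratio_value_prob v y y' : rr_ratio * value_prob v y' <= value_prob v y.
Proof.
rewrite -big_split /=; apply: ler_prod => a _.
by rewrite mulr_ge0 ?retention_ratio_ge0 ?Amat_ge0 ?retention_ratio_Amat.
Qed.

Lemma table_prob_tperm (I : finType) (tau x : {ffun I -> value Va}) (r s : I) :
  rr_ratio ^+ 2 * table_prob tau x <= table_prob tau [ffun i => x (tperm r s i)].
Proof.
rewrite /table_prob; under [X in _ <= X]eq_bigr do rewrite ffunE.
apply: (prod_tperm_ge (q := fun i => value_prob (tau i))) => //.
- by move=> ? ?; apply: value_prob_ge0.
- exact: rr_ratio_ge0.
- exact: rr_ratio_le1.
- by move=> ? ? ?; apply: rr_ratio_value_prob.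
Qed.
End RetentionRatio.

Lemma ratio_le_inv (R : realFieldType) (a b k : R) :
  0 <= a -> 0 <= b -> 0 <= k -> k * a <= b -> a / (a + b) <= 1 / (1 + k).
Proof.
move=> a_ge0 b_ge0 k_ge0 kab.
have [->|ab_neq0] := eqVneq (a + b) 0; first by rewrite invr0 mulr0 divr_ge0 // addr_ge0.
have ab_gt0 : 0 < a + b by rewrite lt_def ab_neq0 addr_ge0.
by rewrite ler_pdivrMr // mulrAC ler_pdivlMr ?mul1r; nra.
Qed.

Lemma card_preimage1_le1 (I J : finType) (f : I -> J) (y : J) :
  injective f -> (#|[pred i | f i == y]| <= 1)%N.
Proof.
move=> f_inj; apply/card_le1_eqP => i j /eqP fi /eqP fj.
by apply: f_inj; rewrite fi fj.
Qed.

Section SwapBound.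
Variables (R : realFieldType) (I J : finType) (h : {ffun I -> J} -> R).
Variables (kappa : R) (r : I) (r' : J).
Hypotheses (h_ge0 : forall pi, 0 <= h pi) (kappa_ge0 : 0 <= kappa).
Hypothesis h_noninj : forall pi : {ffun I -> J}, ~~ injectiveb pi -> h pi = 0.
Hypothesis h_swap : forall pi s, kappa * h pi <= h [ffun i => pi (tperm r s i)].

Lemma sum_preimage_le :
  \sum_(s | s != r) \sum_(pi : {ffun I -> J} | pi s == r') h pi <=
  \sum_(pi : {ffun I -> J} | pi r != r') h pi.
Proof.
rewrite (exchange_big_dep predT) //= [X in _ <= X]big_mkcond /=.
apply: ler_sum => pi _; rewrite sumr_const.
case: (boolP (injectiveb pi)) => [/injectiveP pi_inj | /h_noninj ->]; last first.
  by rewrite mul0rn; case: ifP.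
have card_le1 : (#|[pred s | (s != r) && (pi s == r')]| <= 1)%N.
  apply: leq_trans (card_preimage1_le1 r' pi_inj); apply: subset_leq_card.
  by apply/subsetP => s /andP[].
case: ifPn => [_ | /negPn /eqP pir].
  by rewrite -[X in _ <= X]mulr1n ler_wpMn2l.
suff -> : #|[pred s | (s != r) && (pi s == r')]| = 0%N by [].
apply: eq_card0 => s /=; apply/andP => -[s_neq_r /eqP pis].
by move: s_neq_r; rewrite (pi_inj s r) ?eqxx // pis pir.
Qed.

Lemma tperm_sum_ge :
  (#|I|%:R - 1) * kappa * \sum_(pi : {ffun I -> J} | pi r == r') h pi <=
  \sum_(pi : {ffun I -> J} | pi r != r') h pi.
Proof.
apply: le_trans sum_preimage_le.
have -> : (#|I|%:R - 1 : R) = #|[pred s | s != r]|%:R.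
  have n_gt0 : (0 < #|I|)%N by apply/card_gt0P; exists r.
  by rewrite cardC1 -subn1 natrB.
rewrite -mulrA mulr_natl -sumr_const; apply: ler_sum => s _.
apply: le_trans
  (_ : \sum_(pi : {ffun I -> J} | pi r == r') h [ffun i => pi (tperm r s i)] <= _).
  by rewrite mulr_sumr; apply: ler_sum => pi _; apply: h_swap.
have tpermK_ffun : involutive (fun pi : {ffun I -> J} => [ffun i => pi (tperm r s i)]).
  by move=> pi; apply/ffunP => i; rewrite !ffunE tpermK.
rewrite [X in _ <= X](reindex_inj (inv_inj tpermK_ffun)) /=.
by under [X in _ <= X]eq_bigl do rewrite ffunE tpermR.
Qed.

Lemma preimage_ratio_le :
  (\sum_(pi : {ffun I -> J} | pi r == r') h pi) / \sum_pi h pi <=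
  1 / (1 + (#|I|%:R - 1) * kappa).
Proof.
rewrite [X in _ / X <= _](bigID (fun pi : {ffun I -> J} => pi r == r')) /=.
have n_ge1 : 1 <= (#|I|%:R : R) by rewrite ler1n; apply/card_gt0P; exists r.
apply: ratio_le_inv; rewrite ?sumr_ge0 ?mulr_ge0 ?tperm_sum_ge ?subr_ge0 //.
Qed.
End SwapBound.

Section FiniteProbability.
Variables (R : realFieldType) (Omega : finType) (P : Omega -> R).

Lemma Pr_partition (U : finType) (X : Omega -> U) (E : pred Omega) :
  Pr P E = \sum_u Pr P [pred w | (X w == u) && E w].
Proof.
rewrite /Pr (partition_big X predT) //=.
by apply: eq_big => // u _; apply: eq_bigl => w; rewrite andbC.
Qed.

Lemma cPr_partition (U : finType) (X : Omega -> U) (Q : pred U) (F : pred Omega) :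
  cPr P [pred w | Q (X w)] F =
  (\sum_(u | Q u) Pr P [pred w | (X w == u) && F w]) /
    \sum_u Pr P [pred w | (X w == u) && F w].
Proof.
rewrite /cPr -Pr_partition (Pr_partition X); congr (_ / _).
rewrite [RHS]big_mkcond /=; apply: eq_bigr => u _; case: ifPn => Qu.
  by apply: eq_bigl => w /=; case: eqP => //= ->; rewrite Qu.
by rewrite /Pr big_pred0 // => w /=; case: eqP => //= ->; rewrite (negbTE Qu).
Qed.

Hypothesis P_ge0 : forall w, 0 <= P w.

Lemma Pr_ge0 (E : pred Omega) : 0 <= Pr P E.
Proof. exact: sumr_ge0. Qed.

Lemma Pr_mono (E F : pred Omega) : (forall w, E w -> F w) -> Pr P E <= Pr P F.
Proof.
move=> EF; rewrite /Pr [X in _ <= X](bigID E) /=.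
have -> : \sum_(w | E w) P w = \sum_(w | F w && E w) P w.
  by apply: eq_bigl => w; case: (boolP (E w)) => [/EF ->|]; rewrite ?andbF.
by rewrite lerDl sumr_ge0.
Qed.
End FiniteProbability.

Lemma compose_tab_inj (Rw Rw' V : finType) (pi : {ffun Rw -> Rw'}) :
  isbij pi -> injective (fun f : {ffun Rw' -> V} => compose_tab f pi).
Proof.
case/andP=> _ /forallP pi_onto f g fg; apply/ffunP => y.
have /codomP [x ->] := pi_onto y.
by have := congr1 (fun F : {ffun Rw -> V} => F x) fg; rewrite !ffunE.
Qed.

Lemma isbij_tperm (Rw Rw' : finType) (pi : {ffun Rw -> Rw'}) (r s : Rw) :
  isbij pi -> isbij [ffun i => pi (tperm r s i)].
Proof.
case/andP => /injectiveP pi_inj /forallP pi_onto; apply/andP; split.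
  by apply/injectiveP => x y; rewrite !ffunE => /pi_inj /(can_inj (tpermK r s)).
apply/forallP => y; have /codomP [x ->] := pi_onto y.
by apply/codomP; exists (tperm r s x); rewrite ffunE tpermK.
Qed.

Section RetentionReplacement.
Variables (R : realFieldType) (Rw Rw' A : finType) (Va : A -> finType) (rho : A -> R).
Variables (Omega : finType) (P : Omega -> R) (Pi : Omega -> {ffun Rw -> Rw'}).
Variable Delta : Omega -> {ffun {ffun Rw -> value Va} -> {ffun Rw -> value Va}}.
Variables (T : Omega -> {ffun Rw -> value Va}) (T' : Omega -> {ffun Rw' -> value Va}).
Variable tau' : {ffun Rw' -> value Va}.
Hypotheses (rho01 : forall a, 0 <= rho a < 1) (P_ge0 : forall w, 0 <= P w).
Hypothesis rr : rr_perturbation rho P Pi Delta.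
Hypothesis T_Pi_Delta_indep : indep3 P T Pi Delta.
Hypothesis DeltaT : forall w, Delta w (T w) = compose_tab (T' w) (Pi w).

Definition joint_prob (pi : {ffun Rw -> Rw'}) : R :=
  Pr P [pred w | (Pi w == pi) && (T' w == tau')].

Lemma Pr_Pi_bij (pi : {ffun Rw -> Rw'}) : isbij pi ->
  Pr P [pred w | Pi w \in [set pi]] = 1 / #|[pred g : {ffun Rw -> Rw'} | isbij g]|%:R.
Proof.
have [Pi_unif _] := rr; move=> pi_bij; have := Pi_unif pi; rewrite pi_bij => <-.
by apply: eq_bigl => w; rewrite /= inE.
Qed.

Lemma Pr_Delta_table tau x : Pr P [pred w | Delta w tau == x] = table_prob rho tau x.
Proof.
have [_ /(_ tau) [Delta_indep Delta_marginal]] := rr.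
transitivity (Pr P [pred w | [forall i, Delta w tau i \in [set x i]]]).
  apply: eq_bigl => w /=; apply/eqP/forallP => [-> i | Dx]; first by rewrite inE.
  by apply/ffunP => i; apply/eqP; rewrite -in_set1 Dx.
rewrite Delta_indep /table_prob; apply: eq_bigr => i _.
rewrite /value_prob -Delta_marginal.
by apply: eq_bigl => w; rewrite /= inE.
Qed.

Lemma joint_prob_nonbij pi : ~~ isbij pi -> joint_prob pi = 0.
Proof.
have [Pi_unif _] := rr; move=> pi_nbij; apply/eqP; rewrite eq_le (Pr_ge0 P_ge0) andbT.
apply: le_trans (Pr_mono P_ge0 (F := [pred w | Pi w == pi]) _) _.
  by move=> w /andP[].
by rewrite Pi_unif (negbTE pi_nbij).
Qed.

Lemma joint_prob_bij pi : isbij pi -> joint_prob pi =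
  \sum_tau Pr P [pred w | T w \in [set tau]] * Pr P [pred w | Pi w \in [set pi]] *
    table_prob rho tau (compose_tab tau' pi).
Proof.
move=> pi_bij; rewrite /joint_prob (Pr_partition _ T); apply: eq_bigr => tau _.
pose D := [set d : {ffun {ffun Rw -> value Va} -> {ffun Rw -> value Va}} |
                 d tau == compose_tab tau' pi].
have -> : table_prob rho tau (compose_tab tau' pi) = Pr P [pred w | Delta w \in D].
  by rewrite -Pr_Delta_table; apply: eq_bigl => w; rewrite /= inE.
rewrite -T_Pi_Delta_indep; apply: eq_bigl => w /=; rewrite !inE.
case: (eqVneq (T w) tau) => [<- | ] //=.
case: (eqVneq (Pi w) pi) => [Pi_w | ] //=; rewrite DeltaT Pi_w.
by rewrite (inj_eq (compose_tab_inj pi_bij)).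
Qed.

Lemma joint_prob_tperm pi r s :
  rr_ratio Va rho ^+ 2 * joint_prob pi <= joint_prob [ffun i => pi (tperm r s i)].
Proof.
have [pi_bij | /joint_prob_nonbij ->] := boolP (isbij pi); last first.
  by rewrite mulr0 (Pr_ge0 P_ge0).
have pis_bij := isbij_tperm r s pi_bij.
rewrite !joint_prob_bij // !Pr_Pi_bij // mulr_sumr; apply: ler_sum => tau _.
rewrite mulrCA; apply: ler_wpM2l.
  by apply: mulr_ge0; rewrite ?(Pr_ge0 P_ge0) ?divr_ge0.
have -> : compose_tab tau' [ffun i => pi (tperm r s i)] =
          [ffun i => compose_tab tau' pi (tperm r s i)] by apply/ffunP => i; rewrite !ffunE.
exact: table_prob_tperm.
Qed.
End RetentionReplacement.

Theorem corollary5 (R : realType) (Rw Rw' A : finType) (Va : A -> finType)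
    (rho : A -> R) (hcard : #|Rw| = #|Rw'|) (hrho : forall a, 0 <= rho a < 1)
    (Omega : finType) (P : Omega -> R) (hP : is_prob P)
    (Pi : Omega -> {ffun Rw -> Rw'})
    (Delta : Omega -> {ffun {ffun Rw -> value Va} -> {ffun Rw -> value Va}}) :
  rr_perturbation rho P Pi Delta ->
  Pk_anonymization P
    (1 + (#|Rw|%:R - 1) *
         \prod_a ((1 - rho a) / (1 + (#|Va a|%:R - 1) * rho a)) ^+ 2)
    Pi Delta.
Proof.
move=> rr tau' _ T T' [_ [indep DeltaT]] r r'.
have [P_ge0 _] := hP.
rewrite prodrXl -/(rr_ratio _ _) (cPr_partition _ Pi (fun pi => pi r == r')).
apply: (preimage_ratio_le (h := joint_prob P Pi T' tau')).
- by move=> pi; apply: (Pr_ge0 P_ge0).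
- by rewrite exprn_ge0 ?rr_ratio_ge0.
- move=> pi pi_ninj; apply: (joint_prob_nonbij T' tau' P_ge0 rr).
  by move: pi_ninj; apply: contraNN => /andP[].
- by move=> pi s; apply: (joint_prob_tperm tau' hrho P_ge0 rr indep DeltaT).
Qed.
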